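(* Let $\mathcal{S}$ be a state space and let $\mathsf{M}^{(1)},\mathsf{M}^{(2)}$ be dichotomic measurements on $\mathcal{S}$. If $\bar P(\mathsf{M}^{(1)},\mathsf{M}^{(2)})<1$, then $\mathsf{M}^{(1)}$ and $\mathsf{M}^{(2)}$ are not maximally incompatible.
   Context: General probabilistic theory setting: a state space $\mathcal{S}$ is a compact convex subset of a finite-dimensional real vector space, embedded as a base of a closed generating proper cone in a vector space $V$, with unit effect $u$. Effects are linear functionals $e$ on $V$ with $0\le e\le1$ on $\mathcal{S}$; $\|f\|=\max_{s\in\mathcal{S}}|f(s)|$. A measurement with finite outcome set $\Omega$ is a map $x\mapsto\mathsf{M}_x$ to effects with $\sum_x\mathsf{M}_x=u$; a dichotomic measurement has outcome set $\{+,-\}$. For dichotomic $\mathsf{M}^{(1)},\mathsf{M}^{(2)}$, $\bar P(\mathsf{M}^{(1)},\mathsf{M}^{(2)})=\frac18\sum_{x,y\in\{+,-\}}\|\mathsf{M}^{(1)}_x+\mathsf{M}^{(2)}_y\|$. A measurement $\mathsf{T}$ is trivial if $\mathsf{T}_x=p_xu$ for a probability distribution $(p_x)$. Two measurements with outcome sets $\Omega_1,\Omega_2$ are compatible if there is a measurement $\mathsf{J}$ on $\Omega_1\times\Omega_2$ whose marginals are the two measurements. The degree of incompatibility $d(\mathsf{M}^{(1)},\mathsf{M}^{(2)})$ is the maximal $\lambda\in[0,1]$ such that $\lambda\mathsf{M}^{(1)}+(1-\lambda)\mathsf{T}^{(1)}$ and $\lambda\mathsf{M}^{(2)}+(1-\lambda)\mathsf{T}^{(2)}$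 are compatible for some trivial measurements $\mathsf{T}^{(1)},\mathsf{T}^{(2)}$; it always satisfies $d\ge\frac12$, and the measurements are maximally incompatible if $d(\mathsf{M}^{(1)},\mathsf{M}^{(2)})=\frac12$. *)

From HB Require Import structures.
From mathcomp Require Import all_boot all_order all_algebra.
From mathcomp Require Import all_classical all_reals all_analysis.
Set Implicit Arguments. Unset Strict Implicit. Unset Printing Implicit Defensive.
Import Order.TTheory GRing.Theory Num.Theory.
Import numFieldNormedType.Exports.
Local Open Scope classical_set_scope.
Local Open Scope ring_scope.

(* The ambient finite-dimensional real vector space V is 'rV[R]_n.
   Linear functionals on V are represented by vectors f : 'rV[R]_n acting
   by the standard pairing  f(v) = \sum_i f_i v_i  (every linear functional
   on R^n is of this form). *)
Definition pair {R : realType} {n : nat} (f v : 'rV[R]_n) : R :=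
  \sum_(i < n) f ord0 i * v ord0 i.

Definition gen_cone {R : realType} {n : nat} (S : set 'rV[R]_n) : set 'rV[R]_n :=
  [set v | exists t : R, exists s, 0 <= t /\ S s /\ v = t *: s].

(* S is a state space with unit effect u: S is a nonempty compact convex set
   which is a base of the closed, generating, proper (pointed) cone it
   generates, the base being cut out by the unit effect u (u = 1 on S). *)
Definition state_space {R : realType} {n : nat} (S : set 'rV[R]_n) (u : 'rV[R]_n) :
  Prop :=
  (S !=set0) /\
  compact S /\
  (forall x y (t : R), S x -> S y -> 0 <= t <= 1 -> S (t *: x + (1 - t) *: y)) /\
  (forall s, S s -> pair u s = 1) /\
  closed (gen_cone S) /\
  (forall v, gen_cone S v -> gen_cone S (- v) -> v = 0) /\
  (forall v, exists a b, gen_cone S a /\ gen_cone S b /\ v = a - b).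

Definition effect {R : realType} {n : nat} (S : set 'rV[R]_n) (e : 'rV[R]_n) : Prop :=
  forall s, S s -> 0 <= pair e s <= 1.

(* sup-norm on S: ||f|| = max_{s in S} |f(s)|  (a max since S is compact). *)
Definition fnorm {R : realType} {n : nat} (S : set 'rV[R]_n) (f : 'rV[R]_n) : R :=
  sup [set `|pair f s| | s in S].

Definition measurement {R : realType} {n : nat} {O : finType}
  (S : set 'rV[R]_n) (u : 'rV[R]_n) (M : O -> 'rV[R]_n) : Prop :=
  (forall x, effect S (M x)) /\ \sum_(x : O) M x = u.

(* Dichotomic measurements: outcome set {+,-} encoded as bool (true = +). *)

Definition Pbar {R : realType} {n : nat} (S : set 'rV[R]_n)
  (M1 M2 : bool -> 'rV[R]_n) : R :=
  8^-1 * \sum_(x : bool) \sum_(y : bool) fnorm S (M1 x + M2 y).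

Definition trivial_meas {R : realType} {n : nat} {O : finType}
  (u : 'rV[R]_n) (T : O -> 'rV[R]_n) : Prop :=
  exists p : O -> R, (forall x, 0 <= p x) /\ \sum_(x : O) p x = 1 /\
                     (forall x, T x = p x *: u).

Definition compatible {R : realType} {n : nat} {O1 O2 : finType}
  (S : set 'rV[R]_n) (u : 'rV[R]_n) (M1 : O1 -> 'rV[R]_n) (M2 : O2 -> 'rV[R]_n) : Prop :=
  exists J : O1 * O2 -> 'rV[R]_n,
    measurement S u J /\
    (forall x, \sum_(y : O2) J (x, y) = M1 x) /\
    (forall y, \sum_(x : O1) J (x, y) = M2 y).

(* Degree of incompatibility: the maximal (= supremum, attained) lambda in [0,1]
   such that the noisy versions are compatible for some trivial measurements. *)
Definition deg_incomp {R : realType} {n : nat} {O1 O2 : finType}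
  (S : set 'rV[R]_n) (u : 'rV[R]_n) (M1 : O1 -> 'rV[R]_n) (M2 : O2 -> 'rV[R]_n) : R :=
  sup [set l : R | 0 <= l <= 1 /\
        exists (T1 : O1 -> 'rV[R]_n) (T2 : O2 -> 'rV[R]_n),
          trivial_meas u T1 /\ trivial_meas u T2 /\
          compatible S u (fun x => l *: M1 x + (1 - l) *: T1 x)
                         (fun y => l *: M2 y + (1 - l) *: T2 y)].

Definition max_incompatible {R : realType} {n : nat} {O1 O2 : finType}
  (S : set 'rV[R]_n) (u : 'rV[R]_n) (M1 : O1 -> 'rV[R]_n) (M2 : O2 -> 'rV[R]_n) : Prop :=
  deg_incomp S u M1 M2 = 2^-1.

(* Since Pbar < 1, some pair of effects A = M1 x0, B = M2 y0 has N = ||A + B|| < 2.  Mixing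
   both measurements with a fair coin at weight l = 2 / (2 + N) > 1/2 makes them compatible: take
   ((1 - l) / 2) (A + B) as the (x0, y0) entry of the joint measurement; positivity of the other
   three entries reduces to A + B <= N on S and (N - 2)^2 >= 0.  Hence the degree of
   incompatibility is at least 2 / (2 + N) > 1/2. *)

From HB Require Import structures.
From mathcomp Require Import all_boot all_order all_algebra.
From mathcomp Require Import all_classical all_reals all_analysis.
From mathcomp Require Import ring lra.
Set Implicit Arguments. Unset Strict Implicit. Unset Printing Implicit Defensive.
Import Order.TTheory GRing.Theory Num.Theory.
Local Open Scope classical_set_scope.
Local Open Scope ring_scope.

Section Pairing.
Variables (R : realType) (n : nat).
Implicit Types (f g v : 'rV[R]_n) (S : set 'rV[R]_n).

Lemma pairD f g v : pair (f + g) v = pair f v + pair g v.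
Proof. by rewrite /pair -big_split; apply: eq_bigr => i _; rewrite mxE mulrDl. Qed.

Lemma pairZ (c : R) f v : pair (c *: f) v = c * pair f v.
Proof. by rewrite /pair mulr_sumr; apply: eq_bigr => i _; rewrite mxE mulrA. Qed.

Lemma pairN f v : pair (- f) v = - pair f v.
Proof. by rewrite -scaleN1r pairZ mulN1r. Qed.

Lemma ler_pair_fnorm S f (b : R) s :
  (forall t, S t -> `|pair f t| <= b) -> S s -> `|pair f s| <= fnorm S f.
Proof.
move=> hb Ss; apply: sup_upper_bound; last by exists s.
split; first by exists `|pair f s|, s.
by exists b => _ [t St <-]; apply: hb.
Qed.

Lemma fnorm_le S f (b : R) :
  S !=set0 -> (forall t, S t -> `|pair f t| <= b) -> fnorm S f <= b.
Proof.
move=> [s0 Ss0] hb; apply: ge_sup; first by exists `|pair f s0|, s0.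
by move=> _ [t St <-]; apply: hb.
Qed.

Lemma normr_pair_effectD_le2 S f g s :
  effect S f -> effect S g -> S s -> `|pair (f + g) s| <= 2.
Proof.
move=> /(_ s) ef /(_ s) eg Ss; have /andP[? ?] := ef Ss; have /andP[? ?] := eg Ss.
by rewrite pairD ger0_norm; lra.
Qed.

Lemma pair_effectD_le_fnorm S f g s :
  effect S f -> effect S g -> S s -> pair f s + pair g s <= fnorm S (f + g).
Proof.
move=> ef eg Ss; rewrite -pairD; apply: le_trans (ler_norm _) _.
exact: ler_pair_fnorm (fun t => normr_pair_effectD_le2 ef eg) Ss.
Qed.

Lemma fnorm_effectD_ge0_le2 S f g :
  S !=set0 -> effect S f -> effect S g -> 0 <= fnorm S (f + g) <= 2.
Proof.
move=> [s0 Ss0] ef eg; apply/andP; split.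
  apply: le_trans (pair_effectD_le_fnorm ef eg Ss0).
  by apply: addr_ge0; [case/andP: (ef s0 Ss0) | case/andP: (eg s0 Ss0)].
by apply: fnorm_le => [|t]; [exists s0 | apply: normr_pair_effectD_le2].
Qed.

End Pairing.

Section Dichotomic.
Variables (R : realType) (n : nat).
Implicit Types (S : set 'rV[R]_n) (u G : 'rV[R]_n) (M : bool -> 'rV[R]_n).

Lemma sum_bool_if (V : nmodType) (b0 : bool) (X Y : V) :
  \sum_(b : bool) (if b == b0 then X else Y) = X + Y.
Proof. by rewrite big_bool; case: b0 => //=; rewrite addrC. Qed.

Lemma dichotomic_negb {M u} x : \sum_y M y = u -> M (~~ x) = u - M x.
Proof. by rewrite big_bool => <-; case: x => /=; rewrite ?addrK // addrC addrK. Qed.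

(* A joint measurement of two dichotomic measurements is fixed by its (x0, y0) entry G; the
   hypothesis says that all four entries are then effects. *)
Lemma compatible_dichotomic S u (N1 N2 : bool -> 'rV[R]_n) x0 y0 G :
  (forall s, S s -> pair u s = 1) ->
  \sum_x N1 x = u -> \sum_y N2 y = u ->
  (forall s, S s -> [/\ 0 <= pair G s, pair G s <= pair (N1 x0) s,
     pair G s <= pair (N2 y0) s & pair (N1 x0) s + pair (N2 y0) s - pair G s <= 1]) ->
  compatible S u N1 N2.
Proof.
move=> hu sumN1 sumN2 hG.
pose J p := if p.1 == x0 then (if p.2 == y0 then G else N1 x0 - G)
            else (if p.2 == y0 then N2 y0 - G else u - N1 x0 - N2 y0 + G).
have margJ1 x : \sum_y J (x, y) = N1 x.
  rewrite /J /=; have [->|x_x0] := eqVneq x x0; rewrite sum_bool_if.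
    by rewrite addrC subrK.
  have -> : x = ~~ x0 by move: x_x0; rewrite negb_eqb => /addbP <-; rewrite negbK.
  by rewrite (dichotomic_negb x0 sumN1); apply/rowP => i; rewrite !mxE; ring.
have margJ2 y : \sum_x J (x, y) = N2 y.
  rewrite /J /=; have [->|y_y0] := eqVneq y y0; rewrite sum_bool_if.
    by rewrite addrC subrK.
  have -> : y = ~~ y0 by move: y_y0; rewrite negb_eqb => /addbP <-; rewrite negbK.
  by rewrite (dichotomic_negb y0 sumN2); apply/rowP => i; rewrite !mxE; ring.
exists J; split; [split | exact: (conj margJ1 margJ2)].
- move=> [x y] s Ss; have [g0 ga gb abg] := hG s Ss; have u1 := hu s Ss.
  rewrite /J /=; case: (x == x0); case: (y == y0);
    rewrite ?(pairD, pairN) ?u1; apply/andP; split; lra.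
- rewrite -sumN1; under [RHS]eq_bigr do rewrite -margJ1.
  by rewrite pair_bigA; apply: eq_bigr => -[].
Qed.

End Dichotomic.

Section Noisy.
Variables (R : realType) (n : nat).
Implicit Types (S : set 'rV[R]_n) (u : 'rV[R]_n) (M : bool -> 'rV[R]_n) (l : R).

Lemma trivial_meas_half u : trivial_meas u (fun _ : bool => 2^-1 *: u).
Proof.
exists (fun _ => 2^-1); split=> [_|]; first by lra.
by split=> //; rewrite big_bool /=; lra.
Qed.

Lemma sum_noisy_half u M l : \sum_x M x = u ->
  \sum_x (l *: M x + (1 - l) *: (2^-1 *: u)) = u.
Proof.
move=> sumM; rewrite big_split /= -scaler_sumr sumM big_bool.
by apply/rowP => i; rewrite !mxE; field.
Qed.

(* The joint measurement has (x0, y0) entry ((1 - l) / 2) (M1 x0 + M2 y0); the constraint on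
   l is what makes its (~~ x0, ~~ y0) entry nonnegative on S. *)
Lemma compatible_noisy_half S u (M1 M2 : bool -> 'rV[R]_n) x0 y0 l :
  (forall s, S s -> pair u s = 1) ->
  measurement S u M1 -> measurement S u M2 ->
  3^-1 <= l <= 1 -> (3 * l - 1) * fnorm S (M1 x0 + M2 y0) <= 2 * l ->
  compatible S u (fun x => l *: M1 x + (1 - l) *: (2^-1 *: u))
                 (fun y => l *: M2 y + (1 - l) *: (2^-1 *: u)).
Proof.
move=> hu [eff1 sum1] [eff2 sum2] /andP[l_ge l_le] hN.
apply: (compatible_dichotomic (x0 := x0) (y0 := y0)
          (G := ((1 - l) / 2) *: (M1 x0 + M2 y0))) => //; try exact: sum_noisy_half.
move=> s Ss; have hab := pair_effectD_le_fnorm (eff1 x0) (eff2 y0) Ss.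
have /andP[a0 a1] := eff1 x0 s Ss; have /andP[b0 b1] := eff2 y0 s Ss.
rewrite !(pairD, pairZ) hu //.
have Nab : (3 * l - 1) * (pair (M1 x0) s + pair (M2 y0) s) <= 2 * l.
  by apply: le_trans hN; apply: ler_wpM2l => //; lra.
split; nra.
Qed.

End Noisy.

Section Degree.
Variables (R : realType) (n : nat).
Implicit Types (S : set 'rV[R]_n) (u : 'rV[R]_n).

Lemma deg_incomp_ge S u (O1 O2 : finType) (M1 : O1 -> 'rV[R]_n) (M2 : O2 -> 'rV[R]_n) l :
  0 <= l <= 1 ->
  (exists T1 T2, trivial_meas u T1 /\ trivial_meas u T2 /\
     compatible S u (fun x => l *: M1 x + (1 - l) *: T1 x)
                    (fun y => l *: M2 y + (1 - l) *: T2 y)) ->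
  l <= deg_incomp S u M1 M2.
Proof.
move=> l01 noisy; apply: sup_upper_bound => //; split; first by exists l; split.
by exists 1 => k [/andP[_]].
Qed.

Theorem deg_incomp_ge_fnorm S u (M1 M2 : bool -> 'rV[R]_n) x0 y0 :
  S !=set0 -> (forall s, S s -> pair u s = 1) ->
  measurement S u M1 -> measurement S u M2 ->
  2 / (2 + fnorm S (M1 x0 + M2 y0)) <= deg_incomp S u M1 M2.
Proof.
move=> S0 hu hM1 hM2.
have /andP[N_ge0 N_le2] := fnorm_effectD_ge0_le2 S0 (hM1.1 x0) (hM2.1 y0).
set N := fnorm S _ in N_ge0 N_le2 *.
have l_bounds : 3^-1 <= 2 / (2 + N) <= 1.
  by apply/andP; split; rewrite ?ler_pdivlMr ?ler_pdivrMr; lra.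
apply: deg_incomp_ge; first by case/andP: l_bounds => ? ?; apply/andP; split; lra.
exists (fun _ => 2^-1 *: u), (fun _ => 2^-1 *: u).
do 2 (split; first exact: trivial_meas_half).
apply: (compatible_noisy_half (x0 := x0) (y0 := y0)) => //.
have N2_neq0 : 2 + N != 0 by rewrite gt_eqF //; lra.
have -> : (3 * (2 / (2 + N)) - 1) * N = 2 * (2 / (2 + N)) - (N - 2) ^+ 2 / (2 + N).
  by field.
by rewrite lerBlDr lerDl divr_ge0 ?sqr_ge0 //; lra.
Qed.

Lemma Pbar_lt1_fnorm_lt2 S (M1 M2 : bool -> 'rV[R]_n) :
  Pbar S M1 M2 < 1 -> exists x y, fnorm S (M1 x + M2 y) < 2.
Proof.
move=> hP; apply: contrapT => /forallNP no_small.
have ge2 x y : 2 <= fnorm S (M1 x + M2 y).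
  by rewrite leNgt; apply/negP => lt2; apply: (no_small x); exists y.
move: hP; apply/negP; rewrite -leNgt /Pbar !big_bool /=.
have := ge2 true true; have := ge2 true false; have := ge2 false true.
have := ge2 false false; lra.
Qed.

End Degree.

Theorem corollary2 (R : realType) (n : nat) (S : set 'rV[R]_n) (u : 'rV[R]_n)
  (M1 M2 : bool -> 'rV[R]_n) :
  state_space S u ->
  measurement S u M1 -> measurement S u M2 ->
  Pbar S M1 M2 < 1 ->
  ~ max_incompatible S u M1 M2.
Proof.
move=> [S0 [_ [_ [hu _]]]] hM1 hM2 /Pbar_lt1_fnorm_lt2[x [y small]] deg_half.
have /andP[N_ge0 _] := fnorm_effectD_ge0_le2 S0 (hM1.1 x) (hM2.1 y).
have := deg_incomp_ge_fnorm x y S0 hu hM1 hM2.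
by rewrite deg_half ler_pdivrMr; lra.
Qed.
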